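(* Let $(e,h,A),(e',h',A'),(e'',h'',A'')\in\mathcal D_{g,n}$. There exist a graph $\Gamma\in G_{g,n}$ and sets $W,W',W''\in\mathcal C(\Gamma)$ with $W=W'\sqcup W''$ (disjoint union) and $(\mathrm{val}(W),g(W),A(W))=(e,h,A)$, $(\mathrm{val}(W'),g(W'),A(W'))=(e',h',A')$, $(\mathrm{val}(W''),g(W''),A(W''))=(e'',h'',A'')$ if and only if $A=A'\sqcup A''$, $2(h+1-(h'+h''))=e'+e''-e$, and there is a nondegenerate triangle with side lengths $e,e',e''$ (i.e. $e<e'+e''$, $e'<e+e''$, $e''<e+e'$).
   Context: Fix integers $g,n\ge0$ with $2g-2+n>0$, $[n]=\{1,\dots,n\}$. A stable graph of type $(g,n)$ is a finite connected multigraph $\Gamma$ (loops allowed) with genus function $g:V(\Gamma)\to\mathbb Z_{\ge0}$ and markings $A(v)\subseteq[n]$ partitioning $[n]$, such that $|E(\Gamma)|-|V(\Gamma)|+1+\sum_v g(v)=g$ and $2g(v)-2+\mathrm{val}(v)+|A(v)|>0$ for all $v$. $G_{g,n}$ is the set (category) of representatives of isomorphism classes of such graphs. For $W\subseteq V(\Gamma)$: $W^{\mathsf c}=V(\Gamma)\setminus W$, $\mathrm{val}(W)$ = number of edges between $W$ and $W^{\mathsf c}$, $g(W)=|E(\Gamma[W])|-|W|+1+\sum_{v\in W}g(v)$ with $\Gamma[W]$ the induced subgraph, $A(W)=\bigcup_{v\in W}A(v)$. $W$ is nontrivial biconnected if $\emptyset\ne W\ne V(\Gamma)$ and $\Gamma[W],\Gamma[W^{\mathsf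 c}]$ are connected; $\mathcal C(\Gamma)$ is the set of these. The vine graph $V(e,h,A)$ has two vertices $v_1,v_2$ joined by $e$ edges, no loops, $g(v_1)=h$, $A(v_1)=A$, $g(v_2)=g+1-e-h$, $A(v_2)=[n]\setminus A$. $\mathcal D_{g,n}$ is the set of triples $(e,h,A)$ with $e\ge1$, $h\ge0$, $g+1-e-h\ge0$, $A\subseteq[n]$, such that $V(e,h,A)$ is stable. *)

From mathcomp Require Import all_boot all_order all_algebra.
Set Implicit Arguments. Unset Strict Implicit. Unset Printing Implicit Defensive.

(* A (multi)graph with legs: vertices 'I_nv, edges 'I_ne (each edge has an
   unordered pair of endpoints, loops allowed), genus function, and markings
   given by the map sending each marked point j of [n] (encoded as 'I_n) to
   the vertex v with j \in A(v); thus the A(v) partition [n]. *)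
Record sgraph (n : nat) := SGraph {
  nv : nat;
  ne : nat;
  ends : 'I_ne -> 'I_nv * 'I_nv;
  gv : 'I_nv -> nat;
  mark : 'I_n -> 'I_nv }.

Arguments nv {n} s.
Arguments ne {n} s.
Arguments ends {n} s _.
Arguments gv {n} s _.
Arguments mark {n} s _.

Section Graphs.
Variable n : nat.
Variable G : sgraph n.

Definition V := 'I_(nv G).

(* val(v): number of half-edges at v (a loop contributes 2) *)
Definition valv (v : V) : nat :=
  \sum_(i : 'I_(ne G)) (((ends G i).1 == v) + ((ends G i).2 == v)).

Definition Av (v : V) : {set 'I_n} := [set j | mark G j == v].

Definition adjW (W : {set V}) : rel V := fun x y =>
  [&& x \in W, y \in W &
      [exists i : 'I_(ne G), (ends G i == (x, y)) || (ends G i == (y, x))]].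

Definition induced_connected (W : {set V}) : Prop :=
  forall x y, x \in W -> y \in W -> connect (adjW W) x y.

Definition connected_graph : Prop := induced_connected setT.

Definition is_stable (g : nat) : Prop :=
  [/\ connected_graph,
      ne G + 1 + \sum_(v : V) gv G v = g + nv G
      (* i.e. |E| - |V| + 1 + sum_v g(v) = g *)
    & forall v : V, 2 < 2 * gv G v + valv v + #|Av v| ].

Definition edgesW (W : {set V}) : nat :=
  #|[set i : 'I_(ne G) | ((ends G i).1 \in W) && ((ends G i).2 \in W)]|.

Definition valW (W : {set V}) : nat :=
  #|[set i : 'I_(ne G) | ((ends G i).1 \in W) != ((ends G i).2 \in W)]|.

Definition genusW (W : {set V}) : int :=
  (Posz (edgesW W) - Posz #|W| + 1 + Posz (\sum_(v in W) gv G v))%R.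

Definition AW (W : {set V}) : {set 'I_n} := [set j | mark G j \in W].

Definition biconnected (W : {set V}) : Prop :=
  [/\ W != set0, W != setT, induced_connected W & induced_connected (~: W)].

End Graphs.

(* The vine graph V(e,h,A) in type (g,n): vertex 0 = v1, vertex 1 = v2. *)
Definition vine (g n e h : nat) (A : {set 'I_n}) : sgraph n :=
  @SGraph n 2 e (fun _ => (@ord0 1, @ord_max 1))
    (fun v : 'I_2 => if v == ord0 then h else g + 1 - e - h)
    (fun j => if j \in A then @ord0 1 else @ord_max 1).

Definition inD (g n e h : nat) (A : {set 'I_n}) : Prop :=
  [/\ 1 <= e, e + h <= g + 1 & is_stable (vine g e h A) g].

From mathcomp Require Import all_boot all_order all_algebra.
From mathcomp Require Import zify.

(* Split the edges leaving W' or W'' (disjoint, with union W) into the K edges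
   between W' and W'' and the C', C'' edges from W', W'' to the complement of W.
   Then val W = C' + C'', val W' = K + C', val W'' = K + C'' and
   g(W) = g(W') + g(W'') + K - 1, whence 2 (h + 1 - h' - h'') = 2K = e' + e'' - e.
   Connectedness of W, of the complement of W'' and of the complement of W'
   makes K, C' and C'' positive, which is the strict triangle inequality.
   Conversely, solving for K, C', C'' > 0 and joining three vertices carrying
   (h', A'), (h'', A''), (g + 1 - e - h, [n] \ A) by K, C', C'' parallel edges
   gives the graph; its vertices are stable because the vine vertices are. *)

Set Implicit Arguments.
Unset Strict Implicit.
Unset Printing Implicit Defensive.

Lemma card_set_sum (T : finType) (P : pred T) : #|[set x | P x]| = \sum_x P x.
Proof. by rewrite -sum1dep_card big_mkcond; apply: eq_bigr => x _; case: (P x). Qed.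

Section EdgeCounts.
Variables (n : nat) (G : sgraph n).
Implicit Types X Y Z : {set V G}.

Definition edges_between X Y :=
  #|[set i : 'I_(ne G) | ((ends G i).1 \in X) && ((ends G i).2 \in Y)
                      || ((ends G i).1 \in Y) && ((ends G i).2 \in X)]|.

Lemma edges_betweenC X Y : edges_between X Y = edges_between Y X.
Proof. by apply: eq_card => i; rewrite !inE orbC. Qed.

Lemma valW_edges_between X : valW X = edges_between X (~: X).
Proof.
by apply: eq_card => i; rewrite !inE; case: ((ends G i).1 \in X); case: ((ends G i).2 \in X).
Qed.

Lemma edges_betweenUl X Y Z : [disjoint X & Y] -> [disjoint X & Z] -> [disjoint Y & Z] ->
  edges_between (X :|: Y) Z = edges_between X Z + edges_between Y Z.
Proof.
move=> /disjoint_setI0/setP dXY /disjoint_setI0/setP dXZ /disjoint_setI0/setP dYZ.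
rewrite /edges_between !card_set_sum -big_split; apply: eq_bigr => i _ /=.
case: (ends G i) => a b /=; rewrite !inE.
move: (dXY a) (dXY b) (dXZ a) (dXZ b) (dYZ a) (dYZ b); rewrite !inE.
by case: (a \in X) (a \in Y) (a \in Z) (b \in X) (b \in Y) (b \in Z) => [] [] [] [] [] [].
Qed.

Lemma edgesW_setU X Y : [disjoint X & Y] ->
  edgesW (X :|: Y) = edgesW X + edgesW Y + edges_between X Y.
Proof.
move=> /disjoint_setI0/setP dXY.
rewrite /edgesW /edges_between !card_set_sum -!big_split; apply: eq_bigr => i _ /=.
case: (ends G i) => a b /=; rewrite !inE.
move: (dXY a) (dXY b); rewrite !inE.
by case: (a \in X) (a \in Y) (b \in X) (b \in Y) => [] [] [] [].
Qed.

Lemma genusW_setU X Y : [disjoint X & Y] ->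
  genusW (X :|: Y) = (genusW X + genusW Y + (edges_between X Y)%:Z - 1)%R.
Proof.
move=> dXY; rewrite /genusW edgesW_setU // cardsU (disjoint_setI0 dXY) cards0.
have -> : \sum_(v in X :|: Y) gv G v = \sum_(v in X) gv G v + \sum_(v in Y) gv G v.
  by rewrite -bigU //; apply: eq_bigl => v; rewrite inE.
lia.
Qed.

Lemma AW_setU X Y : AW (X :|: Y) = AW X :|: AW Y.
Proof. by apply/setP => j; rewrite !inE. Qed.

Lemma AW_disjoint X Y : [disjoint X & Y] -> [disjoint AW X & AW Y].
Proof.
move=> dXY; rewrite -setI_eq0; apply/eqP/setP => j; rewrite !inE.
by case Xj: (mark G j \in X); rewrite // (disjointFr dXY Xj).
Qed.

Lemma edges_between_gt0 X Y : [disjoint X & Y] -> induced_connected (X :|: Y) ->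
  X != set0 -> Y != set0 -> 0 < edges_between X Y.
Proof.
move=> dXY connXY /set0Pn[x Xx] /set0Pn[y Yy].
have /connectP[p] : connect (adjW (X :|: Y)) x y by apply: connXY; rewrite inE ?Xx ?Yy ?orbT.
rewrite /edges_between card_gt0.
elim: p x Xx => [|w p IHp] u Xu /=; first by move=> _ yu; rewrite yu (disjointFr dXY Xu) in Yy.
case/andP=> /and3P[_ XYw /existsP[i uw]] wp ylast.
case Xw: (w \in X); first exact: IHp Xw wp ylast.
have Yw : w \in Y by move: XYw; rewrite inE Xw.
by apply/set0Pn; exists i; rewrite inE; case/orP: uw => /eqP ->; rewrite /= Xu Yw ?orbT.
Qed.

Lemma setC_disjointU X Y : [disjoint X & Y] -> ~: X = Y :|: ~: (X :|: Y).
Proof.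
move=> dXY; apply/setP => v; rewrite !inE.
by case Xv: (v \in X); rewrite ?(disjointFr dXY Xv) //= orbN.
Qed.

Lemma biconnected_setU X Y : [disjoint X & Y] ->
  biconnected (X :|: Y) -> biconnected X -> biconnected Y ->
  [/\ (2 * (genusW (X :|: Y) + 1 - (genusW X + genusW Y))
         = (valW X)%:Z + (valW Y)%:Z - (valW (X :|: Y))%:Z)%R,
      valW (X :|: Y) < valW X + valW Y,
      valW X < valW (X :|: Y) + valW Y &
      valW Y < valW (X :|: Y) + valW X].
Proof.
move=> dXY [_ XYT connXY _] [X0 _ _ connCX] [Y0 _ _ connCY].
set Z := ~: (X :|: Y).
have dXZ : [disjoint X & Z] by rewrite disjoints_subset setCK subsetUl.
have dYZ : [disjoint Y & Z] by rewrite disjoints_subset setCK subsetUr.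
have Z0 : Z != set0 by apply: contraNneq XYT => Z0; rewrite -[X :|: Y]setCK -/Z Z0 setC0.
have valXY : valW (X :|: Y) = edges_between X Z + edges_between Y Z.
  by rewrite valW_edges_between edges_betweenUl.
have CX : ~: X = Y :|: Z by exact: setC_disjointU.
have CY : ~: Y = X :|: Z by rewrite /Z [X :|: Y]setUC; apply: setC_disjointU; rewrite disjoint_sym.
have valX : valW X = edges_between X Y + edges_between X Z.
  rewrite valW_edges_between CX edges_betweenC edges_betweenUl // 1?disjoint_sym //.
  by rewrite (edges_betweenC Y) (edges_betweenC Z).
have valY : valW Y = edges_between X Y + edges_between Y Z.
  rewrite valW_edges_between CY edges_betweenC edges_betweenUl // 1?disjoint_sym //.
  by rewrite (edges_betweenC Z).
have XY_gt0 : 0 < edges_between X Y by exact: edges_between_gt0.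
have XZ_gt0 : 0 < edges_between X Z by apply: edges_between_gt0; rewrite -?CY.
have YZ_gt0 : 0 < edges_between Y Z by apply: edges_between_gt0; rewrite -?CX.
rewrite genusW_setU // valXY valX valY; split; lia.
Qed.

End EdgeCounts.

Section Vine.
Variables (g n e h : nat) (A : {set 'I_n}).
Let T := vine g e h A.

Lemma valv_vine (v : V T) : valv v = e.
Proof.
rewrite /valv /= sum_nat_const card_ord.
by case: v => [[|[|]]] //= _; rewrite muln1.
Qed.

Lemma Av_vine0 : Av (G := T) ord0 = A.
Proof. by apply/setP => j; rewrite !inE /=; case: (j \in A). Qed.

Lemma Av_vine1 : Av (G := T) ord_max = ~: A.
Proof. by apply/setP => j; rewrite !inE /=; case: (j \in A). Qed.

End Vine.

Lemma inD_stable (g n e h : nat) (A : {set 'I_n}) : inD g e h A ->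
  2 < 2 * h + e + #|A| /\ 2 < 2 * (g + 1 - e - h) + e + #|~: A|.
Proof.
case=> _ _ [_ _ stab]; split.
- by move: (stab ord0); rewrite valv_vine Av_vine0.
- by move: (stab ord_max); rewrite valv_vine Av_vine1.
Qed.

Definition p0 : 'I_3 := @Ordinal 3 0 isT.
Definition p1 : 'I_3 := @Ordinal 3 1 isT.
Definition p2 : 'I_3 := @Ordinal 3 2 isT.

Lemma p_eqF : ((p0 == p1) = false) * ((p0 == p2) = false) * ((p1 == p0) = false) *
              ((p1 == p2) = false) * ((p2 == p0) = false) * ((p2 == p1) = false).
Proof. by do !split. Qed.

Lemma ord3P (v : 'I_3) : [\/ v = p0, v = p1 | v = p2].
Proof.
by case: v => [[|[|[|//]]] ?]; [apply: Or31 | apply: Or32 | apply: Or33]; apply: val_inj.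
Qed.

Lemma sum_ord3 (F : 'I_3 -> nat) : \sum_(v < 3) F v = F p0 + F p1 + F p2.
Proof.
rewrite !big_ord_recl big_ord0 addn0 addnA.
by congr (F _ + F _ + F _); apply: val_inj.
Qed.

Definition triangle_ends (k a i : nat) : 'I_3 * 'I_3 :=
  if i < k then (p0, p1) else if i < k + a then (p0, p2) else (p1, p2).

Definition triangle (n k a b : nat) (gen : 'I_3 -> nat) (m : 'I_n -> 'I_3) : sgraph n :=
  @SGraph n 3 (k + a + b) (fun i => triangle_ends k a i) gen m.

Section Triangle.
Variables (n k a b : nat) (gen : 'I_3 -> nat) (m : 'I_n -> 'I_3).
Let T := triangle k a b gen m.

Lemma sum_triangle_edges (Q : 'I_3 * 'I_3 -> nat) :
  \sum_(i : 'I_(ne T)) Q (ends T i) = k * Q (p0, p1) + a * Q (p0, p2) + b * Q (p1, p2).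
Proof.
rewrite -(big_mkord xpredT (fun i => Q (triangle_ends k a i))).
rewrite (@big_cat_nat _ _ _ (k + a)) ?leq_addr // (@big_cat_nat _ _ _ k 0 (k + a)) ?leq_addr //.
rewrite (@eq_big_nat _ _ _ 0 k _ (fun=> Q (p0, p1))); last first.
  by move=> i /andP[_ ik]; rewrite /triangle_ends ik.
rewrite (@eq_big_nat _ _ _ k (k + a) _ (fun=> Q (p0, p2))); last first.
  by move=> i /andP[ki ika]; rewrite /triangle_ends ltnNge ki ika.
rewrite (@eq_big_nat _ _ _ (k + a) (k + a + b) _ (fun=> Q (p1, p2))); last first.
  move=> i /andP[kai _].
  by rewrite /triangle_ends ltnNge (leq_trans (leq_addr a k) kai) /= ltnNge kai.
by rewrite !sum_nat_const_nat subn0 !addKn !(mulnC _ (Q _)).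
Qed.

Lemma valv_triangle v :
  valv (G := T) v = k * ((p0 == v) + (p1 == v)) + a * ((p0 == v) + (p2 == v))
                    + b * ((p1 == v) + (p2 == v)).
Proof. exact: (sum_triangle_edges (fun uw => (uw.1 == v) + (uw.2 == v))). Qed.

Lemma valW_triangle (S : {set 'I_3}) :
  valW (G := T) S = k * ((p0 \in S) != (p1 \in S)) + a * ((p0 \in S) != (p2 \in S))
                    + b * ((p1 \in S) != (p2 \in S)).
Proof.
rewrite /valW card_set_sum.
exact: (sum_triangle_edges (fun uw => ((uw.1 \in S) != (uw.2 \in S) : nat))).
Qed.

Lemma genusW_triangle (S : {set 'I_3}) :
  genusW (G := T) S =
    ((k * ((p0 \in S) && (p1 \in S)) + a * ((p0 \in S) && (p2 \in S))
        + b * ((p1 \in S) && (p2 \in S)))%:Z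
     - ((p0 \in S) + (p1 \in S) + (p2 \in S))%:Z + 1
     + ((p0 \in S) * gen p0 + (p1 \in S) * gen p1 + (p2 \in S) * gen p2)%:Z)%R.
Proof.
rewrite /genusW /edgesW card_set_sum.
rewrite (sum_triangle_edges (fun uw => ((uw.1 \in S) && (uw.2 \in S) : nat))).
rewrite -sum1_card big_mkcond (big_mkcond (mem S) gen) !sum_ord3 /=.
have ifE (c : bool) x : (if c then x else 0) = c * x by case: c; rewrite ?mul1n.
by rewrite !ifE !muln1.
Qed.

Hypotheses (k_gt0 : 0 < k) (a_gt0 : 0 < a) (b_gt0 : 0 < b).

Lemma triangle_induced_connected (S : {set 'I_3}) : induced_connected (G := T) S.
Proof.
move=> x y Sx Sy; case: (eqVneq x y) => [->|xy]; first exact: connect0.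
apply: connect1; rewrite /adjW Sx Sy /=.
have e01 : 0 < k + a + b by lia.
have e02 : k < k + a + b by lia.
have e12 : k + a < k + a + b by lia.
have ends01 : triangle_ends k a 0 = (p0, p1) by rewrite /triangle_ends k_gt0.
have ends02 : triangle_ends k a k = (p0, p2).
  by rewrite /triangle_ends ltnn -{1}(addn0 k) ltn_add2l a_gt0.
have ends12 : triangle_ends k a (k + a) = (p1, p2).
  by rewrite /triangle_ends ltnn ltnNge leq_addr.
apply/existsP; move: xy; case: (ord3P x) => ->; case: (ord3P y) => -> // _.
- by exists (Ordinal e01); rewrite /= ends01 eqxx.
- by exists (Ordinal e02); rewrite /= ends02 eqxx.
- by exists (Ordinal e01); rewrite /= ends01 eqxx orbT.
- by exists (Ordinal e12); rewrite /= ends12 eqxx.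
- by exists (Ordinal e02); rewrite /= ends02 eqxx orbT.
- by exists (Ordinal e12); rewrite /= ends12 eqxx orbT.
Qed.

Lemma triangle_biconnected (S : {set 'I_3}) : S != set0 -> S != setT -> biconnected (G := T) S.
Proof. by split=> //; apply: triangle_induced_connected. Qed.

End Triangle.

Lemma triangle_realizes_vines (g n e h e' h' e'' h'' : nat) (A A' A'' : {set 'I_n}) :
  inD g e h A -> inD g e' h' A' -> inD g e'' h'' A'' ->
  A = A' :|: A'' -> [disjoint A' & A''] ->
  (2 * (Posz h + 1 - (Posz h' + Posz h'')) = Posz e' + Posz e'' - Posz e)%R ->
  [/\ e < e' + e'', e' < e + e'' & e'' < e + e'] ->
  exists G : sgraph n, is_stable G g /\
     exists W W' W'' : {set 'I_(nv G)},
       [/\ [/\ biconnected W, biconnected W' & biconnected W''],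
           W = W' :|: W'' /\ [disjoint W' & W''],
           [/\ valW W = e, genusW W = Posz h & AW W = A],
           [/\ valW W' = e', genusW W' = Posz h' & AW W' = A'] &
           [/\ valW W'' = e'', genusW W'' = Posz h'' & AW W'' = A'']].
Proof.
move=> De De' De'' AU dA genus_eq [tri tri' tri''].
have [_ ehg _] := De.
have [_ stab2] := inD_stable De.
have [stab0 _] := inD_stable De'.
have [stab1 _] := inD_stable De''.
pose k := h + 1 - (h' + h''); pose a := e' - k; pose b := e'' - k.
have [k_gt0 a_gt0 b_gt0] : [/\ 0 < k, 0 < a & 0 < b] by rewrite /k /a /b; split; lia.
have [eE e'E e''E hE] : [/\ e = a + b, e' = k + a, e'' = k + b & h + 1 = h' + h'' + k].
  by rewrite /k /a /b; split; lia.
pose gen (v : 'I_3) := nth 0 [:: h'; h''; g + 1 - e - h] v.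
pose m j := if j \in A' then p0 else if j \in A'' then p1 else p2.
pose T := triangle k a b gen m.
have mE j : [/\ (m j == p0) = (j \in A'), (m j == p1) = (j \in A'')
              & (m j == p2) = (j \notin A)].
  rewrite /m AU inE; case A'j: (j \in A'); first by rewrite (disjointFr dA A'j) !p_eqF eqxx.
  by case: (j \in A''); rewrite !p_eqF eqxx.
have stab v : 2 < 2 * gen v + valv (G := T) v + #|Av (G := T) v|.
  have Av_eq (A0 : {set 'I_n}) v0 : (forall j, (m j == v0) = (j \in A0)) -> Av (G := T) v0 = A0.
    by move=> mv0; apply/setP => j; rewrite inE mv0.
  rewrite valv_triangle /gen; case: (ord3P v) => ->; rewrite !p_eqF eqxx /=.
  - rewrite (@Av_eq A') => [|j]; last by case: (mE j).
    (* [set] identifies two syntactically different elaborations of the cardinal *)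
    by move: stab0; set c := #|A'|; lia.
  - rewrite (@Av_eq A'') => [|j]; last by case: (mE j).
    by move: stab1; set c := #|A''|; lia.
  - rewrite (@Av_eq (~: A)) => [|j]; last by rewrite inE; case: (mE j).
    by move: stab2; set c := #|~: A|; lia.
exists T; split.
  split=> //; first exact: triangle_induced_connected.
  by rewrite /= sum_ord3 /gen /=; lia.
have AW1 (v : 'I_3) : AW (G := T) [set v] = [set j | m j == v].
  by apply/setP => j; rewrite !inE.
exists [set p0; p1], [set p0], [set p1]; split.
- split; apply: triangle_biconnected => //;
    by [apply/set0Pn; exists p0; rewrite !inE eqxx
       | apply/set0Pn; exists p1; rewrite !inE eqxx
       | apply/eqP => /setP/(_ p2); rewrite !inE !p_eqF].
- by split; rewrite // disjoints1 inE p_eqF.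
- rewrite valW_triangle genusW_triangle /gen !inE !p_eqF eqxx /=.
  split; [lia | lia | apply/setP => j; rewrite AU !inE].
  by case: (mE j) => -> -> _.
- rewrite valW_triangle genusW_triangle /gen AW1 !inE !p_eqF eqxx /=.
  split; [lia | lia | apply/setP => j; rewrite inE].
  by case: (mE j).
- rewrite valW_triangle genusW_triangle /gen AW1 !inE !p_eqF eqxx /=.
  split; [lia | lia | apply/setP => j; rewrite inE].
  by case: (mE j).
Qed.

Theorem mainTheorem10 (g n : nat) (hgn : 2 < 2 * g + n)
  (e h e' h' e'' h'' : nat) (A A' A'' : {set 'I_n}) :
  inD g e h A -> inD g e' h' A' -> inD g e'' h'' A'' ->
  (exists G : sgraph n, is_stable G g /\
     exists W W' W'' : {set 'I_(nv G)},
       [/\ [/\ biconnected W, biconnected W' & biconnected W''],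
           W = W' :|: W'' /\ [disjoint W' & W''],
           [/\ valW W = e, genusW W = Posz h & AW W = A],
           [/\ valW W' = e', genusW W' = Posz h' & AW W' = A'] &
           [/\ valW W'' = e'', genusW W'' = Posz h'' & AW W'' = A'']])
  <->
  [/\ A = A' :|: A'' /\ [disjoint A' & A''],
      (2 * (Posz h + 1 - (Posz h' + Posz h'')) = Posz e' + Posz e'' - Posz e)%R &
      [/\ e < e' + e'', e' < e + e'' & e'' < e + e']].
Proof.
move=> De De' De''; split; last by case=> -[AU dA]; exact: triangle_realizes_vines.
case=> G [_ [W [W' [W'' [[bW bW' bW''] [WU dW] [<- <- <-] [<- <- <-] [<- <- <-]]]]]].
rewrite {}WU in bW *.
have [genus_eq tri tri' tri''] := biconnected_setU dW bW bW' bW''.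
by split; rewrite ?AW_setU ?AW_disjoint.
Qed.
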